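(* Let $\mathcal F$ be a Banach space with a basis $B=(e_i)_{i\in\mathbb N}$ satisfying $\sup_i\|e_i\|_{\mathcal F}<\infty$. Let $p\in(0,\infty)$ and assume $B$ has the $p$-Temlyakov property: there is $c>0$ such that for every finite $I\subset\mathbb N$ and every $(c_i)_{i\in I}\in\mathbb R^I$, $$\tfrac1c|I|^{1/p}\min_{i\in I}|c_i|\le\Big\|\sum_{i\in I}c_ie_i\Big\|_{\mathcal F}\le c|I|^{1/p}\max_{i\in I}|c_i|.$$ Let $0<q<p$ and for $M\in\mathbb N$ define $$\Sigma^q_M=\Big\{\sum_{i=1}^Mc_ie_i:\ c_i\in\mathbb R,\ \sup_{0<\lambda<\infty}\lambda\,|\{i:|c_i|\ge\lambda\}|^{1/q}\le1\Big\}.$$ With $s=\frac1q-\frac1p$, the sequence $\Sigma^q=(\Sigma^q_M)_{M\in\mathbb N}$ is $s$-encodable in $\mathcal F$ (with the metric induced by $\|\cdot\|_{\mathcal F}$).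
   Context: A finite $X\subset A$ is an $\varepsilon$-covering of $A$ if every point of $A$ is within distance $\varepsilon$ of some point of $X$. For $\gamma,h>0$, a $(\gamma,h)$-encoding of $\Sigma=(\Sigma_M)_M$ is a sequence $(\Sigma(\gamma,h)_M)_M$ such that for some $c_1,c_2>0$ and all $M$, $\Sigma(\gamma,h)_M$ is a $c_1M^{-\gamma}$-covering of $\Sigma_M$ with $\log_2|\Sigma(\gamma,h)_M|\le c_2M^{1+h}$. $\Sigma$ is $\gamma$-encodable if it admits a $(\gamma,h)$-encoding for every $h>0$. *)

From HB Require Import structures.
From mathcomp Require Import all_boot all_order all_algebra.
From mathcomp Require Import all_classical all_reals all_analysis.
Set Implicit Arguments. Unset Strict Implicit. Unset Printing Implicit Defensive.
Import Order.TTheory GRing.Theory Num.Theory.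
Import numFieldNormedType.Exports.
Local Open Scope classical_set_scope.
Local Open Scope ring_scope.

Definition schauder_basis {R : realType} {F : normedModType R} (e : nat -> F) :=
  forall x : F, exists! c : nat -> R,
    (fun n => \sum_(0 <= i < n) c i *: e i) @ \oo --> x.

Definition is_covering {R : realType} {F : normedModType R}
  (X : seq F) (A : set F) (eps : R) :=
  uniq X /\ (forall x, x \in X -> A x) /\
  (forall a, A a -> exists2 x, x \in X & `|a - x| <= eps).

Definition is_encoding {R : realType} {F : normedModType R}
  (Sigma : nat -> set F) (gam h : R) (X : nat -> seq F) :=
  exists c1 c2 : R, 0 < c1 /\ 0 < c2 /\
    forall M : nat, (0 < M)%N ->
      is_covering (X M) (Sigma M) (c1 * powR (M%:R) (- gam)) /\
      ln ((size (X M))%:R) / ln 2 <= c2 * powR (M%:R) (1 + h).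

Definition encodable {R : realType} {F : normedModType R}
  (Sigma : nat -> set F) (gam : R) :=
  forall h : R, 0 < h -> exists X : nat -> seq F, is_encoding Sigma gam h X.

Definition temlyakov {R : realType} {F : normedModType R} (e : nat -> F) (p : R) :=
  exists c : R, 0 < c /\
    forall (I : seq nat) (a : nat -> R), uniq I -> I != [::] ->
      let mn := \big[Num.min/`|a (head 0%N I)|]_(i <- I) `|a i| in
      let mx := \big[Num.max/`|a (head 0%N I)|]_(i <- I) `|a i| in
      c^-1 * powR ((size I)%:R) p^-1 * mn <= `|\sum_(i <- I) a i *: e i| /\
      `|\sum_(i <- I) a i *: e i| <= c * powR ((size I)%:R) p^-1 * mx.

Definition SigmaQ {R : realType} {F : normedModType R} (e : nat -> F) (q : R)
  (M : nat) : set F :=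
  [set x | exists a : nat -> R, x = \sum_(i < M) a i *: e i /\
     forall lam : R, 0 < lam ->
       lam * powR ((count (fun i => lam <= `|a i|) (iota 0 M))%:R) q^-1 <= 1].

From HB Require Import structures.
From mathcomp Require Import all_boot all_order all_algebra.
From mathcomp Require Import all_classical all_reals all_analysis.
From mathcomp Require Import zify lra.
Set Implicit Arguments. Unset Strict Implicit. Unset Printing Implicit Defensive.
Import Order.TTheory GRing.Theory Num.Theory.
Import numFieldNormedType.Exports.
Local Open Scope ring_scope.

(* Neither the basis property, nor the Temlyakov property, nor q < p is needed: the
   coefficients of an element of Sigma^q_M lie in [-1, 1], so rounding them to
   the grid (1/N)Z with N = M^k moves the vector by at most M sup|e_i| / N,
   which is O(M^-s) as soon as k >= s + 1.  The grid has (2N + 1)^M points, i.e.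
   O(M log M) = O(M^(1+h)) bits for every h > 0. *)

Section Quantization.
Context {R : realType}.

Definition sign_of (b : bool) : R := if b then -1 else 1.

Lemma norm_sign_of b : `|sign_of b| = 1.
Proof. by case: b; rewrite /sign_of ?normrN normr1. Qed.

Lemma sign_of_normE (a : R) : a = sign_of (a < 0) * `|a|.
Proof.
rewrite /sign_of; case: ltrP => [a_lt0|a_ge0].
  by rewrite ltr0_norm // mulN1r opprK.
by rewrite ger0_norm // mul1r.
Qed.

Definition quant (N : nat) (a : R) : R :=
  sign_of (a < 0) * ((Num.truncn (`|a| * N%:R))%:R / N%:R).

Lemma norm_quant_le N a : (0 < N)%N -> `|quant N a| <= `|a|.
Proof.
move=> N_gt0; have NR_gt0 : 0 < N%:R :> R by rewrite ltr0n.
rewrite /quant normrM norm_sign_of mul1r ger0_norm ?divr_ge0 //.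
by rewrite ler_pdivrMr // truncn_le mulr_ge0.
Qed.

Lemma dist_quant_le N a : (0 < N)%N -> `|a - quant N a| <= N%:R^-1.
Proof.
move=> N_gt0; have NR_gt0 : 0 < N%:R :> R by rewrite ltr0n.
have /andP[trunc_le trunc_gt] := truncn_itv (mulr_ge0 (normr_ge0 a) (ltW NR_gt0)).
set m := Num.truncn _ in trunc_le trunc_gt *.
have -> : a - quant N a = sign_of (a < 0) * ((`|a| * N%:R - m%:R) / N%:R).
  rewrite /quant {1}(sign_of_normE a) -mulrBr mulrBl mulfK ?gt_eqF //.
rewrite normrM norm_sign_of mul1r ger0_norm ?divr_ge0 ?subr_ge0 //.
rewrite ler_pdivrMr // mulVf ?gt_eqF // lerBlDl.
by rewrite -natr1 in trunc_gt; exact: ltW.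
Qed.

Definition grid_point (N : nat) (g : bool * 'I_N.+1) : R :=
  sign_of g.1 * ((g.2 : nat)%:R / N%:R).

Definition grid_index (N : nat) (a : R) : bool * 'I_N.+1 :=
  (a < 0, inord (Num.truncn (`|a| * N%:R))).

Lemma grid_point_indexE N a :
  (0 < N)%N -> `|a| <= 1 -> grid_point (grid_index N a) = quant N a.
Proof.
move=> N_gt0 a_le1; rewrite /grid_point /grid_index /quant /= inordK //.
rewrite ltnS truncn_le_nat (le_lt_trans (y := N%:R)) ?ltr_nat //.
by rewrite ler_piMl // ltr0n.
Qed.

Definition weak_lq_ball (q : R) (M : nat) (a : nat -> R) :=
  forall lam : R, 0 < lam ->
    lam * powR ((count (fun i => lam <= `|a i|) (iota 0 M))%:R) q^-1 <= 1.

Lemma weak_lq_ball_coef_le1 (q : R) M a i :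
  0 < q -> weak_lq_ball q M a -> (i < M)%N -> `|a i| <= 1.
Proof.
move=> q_gt0 a_ball i_lt_M; have [->//|ai_neq0] := eqVneq `|a i| 0.
have ai_gt0 : 0 < `|a i| by rewrite lt_neqAle eq_sym ai_neq0 normr_ge0.
apply: le_trans (a_ball _ ai_gt0); rewrite ler_peMr //.
have count_ge1 : (1 <= count (fun j : nat => (`|a i| <= `|a j|)%R) (iota 0 M))%N.
  by rewrite -has_count; apply/hasP; exists i; rewrite ?mem_iota.
apply: (le_trans (y := powR 1 q^-1)); first by rewrite powR1.
by rewrite ge0_ler_powR ?nnegrE ?invr_ge0 ?ler0n ?ler1n // ltW.
Qed.

Lemma weak_lq_ball_quant (q : R) M N a : 0 < q -> (0 < N)%N ->
  weak_lq_ball q M a -> weak_lq_ball q M (fun i => quant N (a i)).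
Proof.
move=> q_gt0 N_gt0 a_ball lam lam_gt0; apply: le_trans (a_ball _ lam_gt0).
rewrite ler_pM2l // ge0_ler_powR ?nnegrE ?invr_ge0 ?ler0n ?(ltW q_gt0) //.
rewrite ler_nat; apply: sub_count => j /= lam_le.
exact: le_trans lam_le (norm_quant_le _ N_gt0).
Qed.

End Quantization.

Section Codebook.
Variables (R : realType) (F : normedModType R) (e : nat -> F).

Definition grid_vec M N (g : {ffun 'I_M -> bool * 'I_N.+1}) : F :=
  \sum_(i < M) grid_point (g i) *: e i.

Definition codebook (A : set F) M N : seq F :=
  undup [seq grid_vec g | g <- enum {ffun 'I_M -> bool * 'I_N.+1}
                        & `[< A (grid_vec g) >]].

Lemma codebook_sub A M N x : x \in codebook A M N -> A x.
Proof.
by rewrite mem_undup => /mapP[g]; rewrite mem_filter => /andP[/asboolP ? _] ->.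
Qed.

Lemma size_codebook_le A M N : (size (codebook A M N) <= (2 * N.+1) ^ M)%N.
Proof.
rewrite (leq_trans (size_undup _)) // size_map size_filter.
rewrite (leq_trans (count_size _ _)) //.
by rewrite -cardT card_ffun card_prod card_bool !card_ord.
Qed.

Lemma is_covering_le (X : seq F) A eps eps' :
  eps <= eps' -> is_covering X A eps -> is_covering X A eps'.
Proof.
move=> eps_le [X_uniq [X_sub X_cover]]; do 2!split=> //.
by move=> a /X_cover[x x_in dist_le]; exists x => //; exact: le_trans dist_le eps_le.
Qed.

Lemma codebook_covering (K q : R) M N : (forall i, `|e i| <= K) ->
  0 < q -> (0 < N)%N ->
  is_covering (codebook (SigmaQ e q M) M N) (SigmaQ e q M) (M%:R / N%:R * K).
Proof.
move=> e_le q_gt0 N_gt0; split; first exact: undup_uniq.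
split=> [|x [a [-> a_ball]]]; first exact: codebook_sub.
pose g := [ffun i : 'I_M => grid_index N (a i)].
have g_vecE : grid_vec g = \sum_(i < M) quant N (a i) *: e i.
  apply: eq_bigr => i _; rewrite ffunE grid_point_indexE //.
  exact: weak_lq_ball_coef_le1 q_gt0 a_ball (ltn_ord i).
exists (grid_vec g).
  rewrite mem_undup; apply/mapP; exists g => //.
  rewrite mem_filter mem_enum andbT; apply/asboolP; rewrite g_vecE.
  by exists (fun i => quant N (a i)); split=> //; exact: weak_lq_ball_quant.
rewrite g_vecE -sumrB (le_trans (ler_norm_sum _ _ _)) //.
apply: (le_trans (y := \sum_(i < M) N%:R^-1 * K)).
  apply: ler_sum => i _; rewrite -scalerBl normrZ.
  by apply: ler_pM => //; exact: dist_quant_le.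
by rewrite big_const_ord iter_addr_0 -[_ *+ M]mulr_natl mulrA.
Qed.

End Codebook.

Section Asymptotics.
Context {R : realType}.

(* [ln 0 = 0] in this library, so no positivity is needed for [n]. *)
Lemma ln_natr_le (n m : nat) : (n <= m)%N -> (0 < m)%N -> ln (n%:R : R) <= ln m%:R.
Proof.
move=> n_le_m m_gt0; case: n n_le_m => [|n] n_le_m.
  by rewrite ln0 // ln_ge0 // ler1n.
by rewrite ler_ln ?posrE ?ltr0n // ler_nat.
Qed.

Lemma ln_le_powR_div (x h : R) : 0 < x -> 0 < h -> ln x <= powR x h / h.
Proof.
move=> x_gt0 h_gt0; rewrite ler_pdivlMr // mulrC -ln_powR.
exact/ltW/ln_sublinear/powR_gt0.
Qed.

Lemma natr_div_expn_le_powR (M k : nat) (s : R) :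
  (0 < M)%N -> s + 1 <= k%:R -> M%:R / (M ^ k)%:R <= powR M%:R (- s).
Proof.
move=> M_gt0 k_ge; have M_neq0 : M%:R != 0 :> R by rewrite pnatr_eq0 -lt0n.
have -> : M%:R / (M ^ k)%:R = powR M%:R (1 - k%:R) :> R.
  by rewrite powRB ?M_neq0 ?implybT // powRr1 ?powR_mulrn ?natrX ?ler0n.
by rewrite ler_powR ?ler1n //; lra.
Qed.

Lemma ln_grid_size_le (M k : nat) (h : R) : (0 < M)%N -> 0 < h ->
  ln ((2 * (M ^ k).+1) ^ M)%:R <= (ln 4 + k%:R / h) * powR M%:R (1 + h).
Proof.
move=> M_gt0 h_gt0; have M_ge1 : 1 <= M%:R :> R by rewrite ler1n.
have ln4_gt0 : 0 < ln 4 :> R by rewrite ln_gt0 //; lra.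
have Mh_ge1 : 1 <= powR M%:R h :> R.
  by rewrite -[leLHS](powRr0 (M%:R : R)) ler_powR // ltW.
have ln_base_le : ln (2 * (M ^ k).+1)%:R <= ln 4 + k%:R * ln M%:R :> R.
  apply: (le_trans (y := ln (4 * M ^ k)%:R)).
    by apply: ln_natr_le; rewrite ?muln_gt0 ?expn_gt0 ?M_gt0 //; lia.
  by rewrite natrM lnM ?posrE ?ltr0n ?expn_gt0 ?M_gt0 // natrX -powR_mulrn ?ler0n // ln_powR.
rewrite natrX lnXn ?ltr0n // -[_ *+ M]mulr_natl.
rewrite powRD ?powRr1 ?ler0n //; last by rewrite pnatr_eq0 -lt0n M_gt0 implybT.
apply: le_trans (ler_wpM2l (ler0n _ M) ln_base_le) _.
rewrite mulrCA; apply: ler_wpM2l; rewrite ?ler0n // mulrDl.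
apply: lerD; first by rewrite ler_peMr // ltW.
rewrite -mulrA; apply: ler_wpM2l; rewrite ?ler0n // mulrC.
by apply: ln_le_powR_div => //; rewrite ltr0n.
Qed.

End Asymptotics.

Theorem mainTheorem14 (R : realType) (F : completeNormedModType R)
  (e : nat -> F) (p q : R) :
  schauder_basis e ->
  (exists K : R, forall i, `|e i| <= K) ->
  0 < p -> temlyakov e p ->
  0 < q -> q < p ->
  encodable (SigmaQ e q) (q^-1 - p^-1).
Proof.
move=> _ [K e_le] _ _ q_gt0 _ h h_gt0.
set s := q^-1 - p^-1; pose k := (Num.truncn (s + 1)).+1.
have k_ge : s + 1 <= k%:R by rewrite ltW // truncnS_gt.
have K_ge0 : 0 <= K := le_trans (normr_ge0 _) (e_le 0%N).
have ln2_gt0 : 0 < ln 2 :> R by rewrite ln_gt0 //; lra.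
exists (fun M => codebook e (SigmaQ e q M) M (M ^ k)).
exists (K + 1), ((ln 4 + k%:R / h) / ln 2); split; first lra.
split.
  by rewrite divr_gt0 // ltr_pwDl ?divr_ge0 ?ln_gt0 //; lra.
move=> M M_gt0; split.
  apply: is_covering_le (codebook_covering _ e_le q_gt0 _); last first.
    by rewrite expn_gt0 M_gt0.
  rewrite mulrC ler_pM ?divr_ge0 ?ler0n //; first lra.
  exact: natr_div_expn_le_powR.
rewrite mulrAC ler_pM2r ?invr_gt0 //.
apply: le_trans (ln_grid_size_le k M_gt0 h_gt0).
by apply: ln_natr_le; rewrite ?size_codebook_le ?expn_gt0.
Qed.
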